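(* Let $\mathfrak g=\mathfrak r_3$, the Lie algebra with basis $\{e_1,e_2,e_3\}$ and nonzero brackets $[e_1,e_2]=e_2+e_3$, $[e_1,e_3]=e_3$, identified with $\mathbb R^3$ via this basis. Then $$U=\left\{\begin{pmatrix}1&0&0\\0&1&0\\0&0&1/\lambda\end{pmatrix}:\lambda>0\right\}$$ is a set of representatives of $\mathcal{PM}(\mathfrak g)$.
   Context: $\mathcal M(\mathfrak g)$ is the set of inner products on $\mathfrak g\cong\mathbb R^3$, with $\mathrm{GL}_3(\mathbb R)$-action $g.\langle\cdot,\cdot\rangle=\langle g^{-1}\cdot,g^{-1}\cdot\rangle$; $\langle\cdot,\cdot\rangle_0$ makes $\{e_1,e_2,e_3\}$ orthonormal. Two inner products are isometric up to scaling if $\langle\cdot,\cdot\rangle_1=k\langle f\cdot,f\cdot\rangle_2$ for some $k>0$ and Lie algebra automorphism $f$; $[\langle\cdot,\cdot\rangle]$ denotes the equivalence class and $\mathcal{PM}(\mathfrak g)$ the set of classes. A subset $U\subset\mathrm{GL}_3(\mathbb R)$ is a set of representatives of $\mathcal{PM}(\mathfrak g)$ if $\mathcal{PM}(\mathfrak g)=\{[h.\langle\cdot,\cdot\rangle_0]: h\in U\}$. *)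

From HB Require Import structures.
From mathcomp Require Import all_boot all_order all_algebra.
From mathcomp Require Import reals.
Set Implicit Arguments. Unset Strict Implicit. Unset Printing Implicit Defensive.
Import Order.TTheory GRing.Theory Num.Theory.
Local Open Scope ring_scope.

Section Defs.
Variable R : realType.

(* g ≅ R^3 via the basis e_1,e_2,e_3 (indices 0,1,2); vectors are columns. *)
Definition vec := 'cV[R]_3.

Definition i0 : 'I_3 := @Ordinal 3 0 isT.
Definition i1 : 'I_3 := @Ordinal 3 1 isT.
Definition i2 : 'I_3 := @Ordinal 3 2 isT.

(* Lie bracket of r_3: [e1,e2] = e2 + e3, [e1,e3] = e3, [e2,e3] = 0,
   extended bilinearly and antisymmetrically. *)
Definition r3_bracket (x y : vec) : vec :=
  let a := x i0 0 * y i1 0 - x i1 0 * y i0 0 in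
  let b := x i0 0 * y i2 0 - x i2 0 * y i0 0 in
  \col_(i < 3) (if i == i0 then 0 else if i == i1 then a else a + b).

Definition bform := vec -> vec -> R.

Definition is_inner_product (B : bform) : Prop :=
  [/\ (forall (a : R) (x y z : vec), B (a *: x + y) z = a * B x z + B y z),
      (forall x y : vec, B x y = B y x)
    & (forall x : vec, x != 0 -> 0 < B x x)].

Definition ip0 : bform := fun x y => (x^T *m y) 0 0.

Definition act (g : 'M[R]_3) (B : bform) : bform :=
  fun x y => B (invmx g *m x) (invmx g *m y).

Definition is_lie_aut (f : 'M[R]_3) : Prop :=
  f \in unitmx /\ forall x y : vec, f *m r3_bracket x y = r3_bracket (f *m x) (f *m y).

Definition isom_up_to_scaling (B1 B2 : bform) : Prop :=
  exists (k : R) (f : 'M[R]_3),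
    0 < k /\ is_lie_aut f /\ forall x y : vec, B1 x y = k * B2 (f *m x) (f *m y).

Definition pclass (B : bform) : bform -> Prop :=
  fun B' => is_inner_product B' /\ isom_up_to_scaling B' B.

Definition Umat (l : R) : 'M[R]_3 :=
  \matrix_(i < 3, j < 3) (if i == j then (if i == i2 then l^-1 else 1) else 0).

End Defs.


From HB Require Import structures.
From mathcomp Require Import all_boot all_order all_algebra.
From mathcomp Require Import reals boolp ring.
Import Order.TTheory GRing.Theory Num.Theory.
Local Open Scope ring_scope.
Set Implicit Arguments. Unset Strict Implicit.

(* Completing squares along e3, then e2 (an LDL decomposition of the Gram
   matrix), writes any inner product as
   B x y = c x0 y0 + s u1(x) u1(y) + g22 u2(x) u2(y) with c, s, g22 > 0,
   u1 = x1 + tau x0 and u2 = x2 + (linear in x0, x1).  The lower-triangular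
   matrices [[1,0,0],[p,a,0],[q,b,a]] (a <> 0) are automorphisms of r3, and
   one of them maps x to (x0, a u1(x), a u2(x)).  Taking a^2 = s/c and scaling
   by c turns B into c (x0 y0 + x1' y1' + l^2 x2' y2') with l^2 = g22/s, i.e.
   into the representative diag(1, 1, 1/l).<,>_0; the classes agree because
   isometry up to scaling is an equivalence relation. *)

Section Coordinates.
Variable R : realType.

Lemma ord3P (i : 'I_3) : [\/ i = i0, i = i1 | i = i2].
Proof.
by case: i => [[|[|[|k]]] i_lt3] //;
  [constructor 1 | constructor 2 | constructor 3]; apply/val_inj.
Qed.

Definition col3 (a b c : R) : vec R :=
  \col_(i < 3) (if i == i0 then a else if i == i1 then b else c).

Lemma col3E a b c :
  (col3 a b c i0 0 = a) * (col3 a b c i1 0 = b) * (col3 a b c i2 0 = c).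
Proof. by rewrite !mxE. Qed.

Lemma col3_eq0 a b c : (col3 a b c == 0) = [&& a == 0, b == 0 & c == 0].
Proof.
apply/eqP/and3P => [/matrixP col0|[/eqP-> /eqP-> /eqP->]].
  by have := col0 i0 0; have := col0 i1 0; have := col0 i2 0; rewrite !mxE /= => -> -> ->.
by apply/matrixP => i j; rewrite !mxE !if_same.
Qed.

Definition evec (i : 'I_3) : vec R := delta_mx i 0.

Lemma vec_evec (x : vec R) :
  x = x i0 0 *: evec i0 + x i1 0 *: evec i1 + x i2 0 *: evec i2.
Proof.
apply/matrixP => i j; rewrite !ord1 !mxE.
by case: (ord3P i) => ->; rewrite /= ?mulr1 ?mulr0 ?addr0 ?add0r.
Qed.

Lemma evec_neq0 i : evec i != 0.
Proof. by apply/eqP => /matrixP/(_ i 0)/eqP; rewrite !mxE !eqxx oner_eq0. Qed.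

Lemma mulmx3E m n (M : 'M[R]_(m, 3)) (x : 'M[R]_(3, n)) i j :
  (M *m x) i j = M i i0 * x i0 j + M i i1 * x i1 j + M i i2 * x i2 j.
Proof.
have E1 : lift ord0 (ord0 : 'I_2) = i1 by apply/val_inj.
have E2 : lift ord0 (lift ord0 (ord0 : 'I_1)) = i2 by apply/val_inj.
have E0 : ord0 = i0 by apply/val_inj.
by rewrite mxE !big_ord_recl big_ord0 addr0 addrA E2 E1 E0.
Qed.

Lemma r3_bracketE (x y : vec R) : r3_bracket x y =
  col3 0 (x i0 0 * y i1 0 - x i1 0 * y i0 0)
      ((x i0 0 * y i1 0 - x i1 0 * y i0 0) + (x i0 0 * y i2 0 - x i2 0 * y i0 0)).
Proof. by apply/matrixP => i j; rewrite !mxE. Qed.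

End Coordinates.

Arguments evec {R}.

Section InnerProducts.
Variable R : realType.
Implicit Types (B : bform R) (x y z : vec R).

Lemma inner_product_bilinear B : is_inner_product B ->
  [/\ forall x y z, B (x + y) z = B x z + B y z,
      forall a x z, B (a *: x) z = a * B x z,
      forall x y z, B z (x + y) = B z x + B z y
    & forall a x z, B z (a *: x) = a * B z x].
Proof.
case=> linB symB _.
have addB x y z : B (x + y) z = B x z + B y z.
  by rewrite -[x in LHS]scale1r linB mul1r.
have scaleB a x z : B (a *: x) z = a * B x z.
  have B0 : B 0 z = 0 by apply: (addIr (B 0 z)); rewrite -addB !addr0 add0r.
  by rewrite -[a *: x]addr0 linB B0 addr0.
by split=> // [x y z|a x z]; rewrite symB ?addB ?scaleB -?(symB z).
Qed.

Lemma inner_product_gramE B : is_inner_product B -> forall x y,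
  B x y =
    x i0 0 * (y i0 0 * B (evec i0) (evec i0) + y i1 0 * B (evec i0) (evec i1)
              + y i2 0 * B (evec i0) (evec i2))
  + x i1 0 * (y i0 0 * B (evec i0) (evec i1) + y i1 0 * B (evec i1) (evec i1)
              + y i2 0 * B (evec i1) (evec i2))
  + x i2 0 * (y i0 0 * B (evec i0) (evec i2) + y i1 0 * B (evec i1) (evec i2)
              + y i2 0 * B (evec i2) (evec i2)).
Proof.
move=> HB x y; have [addB scaleB addBr scaleBr] := inner_product_bilinear HB.
have [_ symB _] := HB.
rewrite {1}(vec_evec x) !addB !scaleB {1 2 3}(vec_evec y) !addBr !scaleBr.
by rewrite (symB (evec i1) (evec i0)) (symB (evec i2)) (symB (evec i2)).
Qed.

Lemma ip0E x y : ip0 x y = x i0 0 * y i0 0 + x i1 0 * y i1 0 + x i2 0 * y i2 0.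
Proof. by rewrite /ip0 mulmx3E !mxE. Qed.

Lemma ip0_inner_product : is_inner_product (@ip0 R).
Proof.
split=> [a x y z|x y|x x_neq0].
- by rewrite /ip0 linearD linearZ /= mulmxDl -scalemxAl !mxE.
- by rewrite !ip0E ![y _ 0 * _]mulrC.
have sq_ge0 i : 0 <= x i 0 * x i 0 by rewrite -expr2 sqr_ge0.
have ip0_sum : ip0 x x = \sum_i x i 0 * x i 0.
  by rewrite /ip0 mxE; apply: eq_bigr => i _; rewrite mxE.
rewrite lt_def ip0_sum sumr_ge0 // andbT; apply: contra x_neq0 => /eqP sum0.
apply/eqP/matrixP => i j; rewrite ord1 mxE.
have /eqP : x i 0 * x i 0 = 0 by apply: (psumr_eq0P _ sum0) => // k _.
by rewrite mulf_eq0 orbb => /eqP.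
Qed.

Lemma act_inner_product (g : 'M[R]_3) B :
  g \in unitmx -> is_inner_product B -> is_inner_product (act g B).
Proof.
move=> g_unit [linB symB posB]; split=> [a x y z|x y|x x_neq0]; rewrite /act.
- by rewrite mulmxDr -scalemxAr linB.
- exact: symB.
apply: posB; apply: contra x_neq0 => /eqP gx0.
by rewrite -[x](mulKVmx g_unit) gx0 mulmx0.
Qed.

End InnerProducts.

Section DiagonalRepresentatives.
Variable R : realType.
Implicit Types (l : R) (x y : vec R).

Lemma Umat_mulV l : l != 0 -> Umat l *m Umat l^-1 = 1%:M.
Proof.
move=> l_neq0; apply/matrixP => i j; rewrite mulmx3E !mxE.
by case: (ord3P i) => ->; case: (ord3P j) => -> /=;
  rewrite ?mulr0 ?mul0r ?mulr1 ?addr0 ?add0r ?invrK ?mulVf.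
Qed.

Lemma Umat_unit l : l != 0 -> Umat l \in unitmx.
Proof. by move=> /Umat_mulV /mulmx1_unit []. Qed.

Lemma invmx_Umat l : l != 0 -> invmx (Umat l) = Umat l^-1.
Proof.
by move=> l_neq0; rewrite -[RHS](mulKmx (Umat_unit l_neq0)) Umat_mulV // mulmx1.
Qed.

Lemma act_Umat_ip0E l x y : l != 0 ->
  act (Umat l) (@ip0 R) x y = x i0 0 * y i0 0 + x i1 0 * y i1 0 + (l * x i2 0) * (l * y i2 0).
Proof.
move=> l_neq0; rewrite /act invmx_Umat // ip0E !mulmx3E !mxE /= invrK.
by rewrite !mul0r !mul1r !add0r !addr0.
Qed.

End DiagonalRepresentatives.

Section Automorphisms.
Variable R : realType.
Implicit Types (f g : 'M[R]_3) (B : bform R).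

Lemma is_lie_aut_mul f g : is_lie_aut f -> is_lie_aut g -> is_lie_aut (g *m f).
Proof.
move=> [f_unit f_br] [g_unit g_br]; split; first by rewrite unitmx_mul g_unit f_unit.
by move=> x y; rewrite -mulmxA f_br g_br !mulmxA.
Qed.

Lemma is_lie_aut_inv f : is_lie_aut f -> is_lie_aut (invmx f).
Proof.
move=> [f_unit f_br]; split=> [|x y]; first by rewrite unitmx_inv.
apply: (can_inj (mulKmx f_unit)).
by rewrite mulmxA mulmxV // mul1mx f_br !mulmxA mulmxV // !mul1mx.
Qed.

Lemma isom_up_to_scaling_trans B1 B2 B3 :
  isom_up_to_scaling B1 B2 -> isom_up_to_scaling B2 B3 -> isom_up_to_scaling B1 B3.
Proof.
move=> [k1 [f1 [k1_gt0 [f1_aut B12]]]] [k2 [f2 [k2_gt0 [f2_aut B23]]]].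
exists (k1 * k2), (f2 *m f1); split; first by rewrite mulr_gt0.
split=> [|x y]; first exact: is_lie_aut_mul.
by rewrite B12 B23 !mulmxA mulrA.
Qed.

Lemma isom_up_to_scaling_sym B1 B2 :
  isom_up_to_scaling B1 B2 -> isom_up_to_scaling B2 B1.
Proof.
move=> [k [f [k_gt0 [f_aut B12]]]]; have [f_unit _] := f_aut.
exists k^-1, (invmx f); split; first by rewrite invr_gt0.
split=> [|x y]; first exact: is_lie_aut_inv.
by rewrite B12 !mulmxA !mulmxV // !mul1mx mulKf ?gt_eqF.
Qed.

Lemma pclass_eq B1 B2 : isom_up_to_scaling B1 B2 -> pclass B1 = pclass B2.
Proof.
move=> B12; apply/funext => B; apply/propext; rewrite /pclass.
split=> -[B_ip BB]; split=> //; apply: isom_up_to_scaling_trans BB _ => //.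
exact: isom_up_to_scaling_sym.
Qed.

Definition r3_aut (p q a b : R) : 'M[R]_3 :=
  \matrix_(i < 3, j < 3)
    (if i == i0 then (if j == i0 then 1 else 0)
     else if i == i1 then (if j == i0 then p else if j == i1 then a else 0)
     else (if j == i0 then q else if j == i1 then b else a)).

Lemma r3_autE p q a b (x : vec R) : r3_aut p q a b *m x =
  col3 (x i0 0) (p * x i0 0 + a * x i1 0) (q * x i0 0 + b * x i1 0 + a * x i2 0).
Proof.
apply/matrixP => i j; rewrite !ord1 mulmx3E !mxE.
by case: (ord3P i) => -> /=; rewrite ?mul1r ?mul0r ?addr0 ?add0r.
Qed.

Lemma is_lie_aut_r3_aut p q a b : a != 0 -> is_lie_aut (r3_aut p q a b).
Proof.
move=> a_neq0; split.
  rewrite unitmxE det_trig; last first.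
    apply/is_trig_mxP => i j; rewrite !mxE.
    by case: (ord3P i) => ->; case: (ord3P j) => ->.
  by rewrite !big_ord_recl big_ord0 !mxE /= mul1r mulr1 unitfE mulf_neq0.
move=> x y; rewrite !r3_autE !r3_bracketE.
by apply/matrixP => i j; rewrite !ord1 !mxE; case: (ord3P i) => -> /=; ring.
Qed.

End Automorphisms.

Section NormalForm.
Variables (R : realType) (B : bform R).
Hypothesis B_ip : is_inner_product B.

Local Notation g00 := (B (evec i0) (evec i0)).
Local Notation g01 := (B (evec i0) (evec i1)).
Local Notation g02 := (B (evec i0) (evec i2)).
Local Notation g11 := (B (evec i1) (evec i1)).
Local Notation g12 := (B (evec i1) (evec i2)).
Local Notation g22 := (B (evec i2) (evec i2)).
Local Notation s := (g11 - g12 ^+ 2 / g22).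
Local Notation t := (g01 - g02 * g12 / g22).
Local Notation c := (g00 - g02 ^+ 2 / g22 - t ^+ 2 / s).
Local Notation u1 x := (x i1 0 + t / s * x i0 0).
Local Notation u2 x := (x i2 0 + (g12 * x i1 0 + g02 * x i0 0) / g22).

Lemma gram22_gt0 : 0 < g22.
Proof. by case: B_ip => _ _; apply; apply: evec_neq0. Qed.

Lemma schur1_gt0 : 0 < s.
Proof.
have g22_neq0 : g22 != 0 by rewrite gt_eqF ?gram22_gt0.
have [_ _ posB] := B_ip.
pose v := col3 0 1 (- g12 / g22).
have -> : s = B v v by rewrite [RHS](inner_product_gramE B_ip) !mxE /=; field.
by apply: posB; rewrite col3_eq0 oner_eq0 andbF.
Qed.

Lemma inner_product_LDL x y :
  B x y = c * (x i0 0 * y i0 0) + s * (u1 x * u1 y) + g22 * (u2 x * u2 y).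
Proof.
have g22_neq0 : g22 != 0 by rewrite gt_eqF ?gram22_gt0.
have minor_neq0 : g11 * g22 - g12 ^+ 2 != 0.
  have -> : g11 * g22 - g12 ^+ 2 = s * g22 by field.
  by rewrite mulf_neq0 // gt_eqF ?schur1_gt0.
by rewrite [LHS](inner_product_gramE B_ip); field; rewrite g22_neq0.
Qed.

Lemma schur0_gt0 : 0 < c.
Proof.
have [_ _ posB] := B_ip.
pose v1 := - (t / s); pose v := col3 1 v1 (- (g12 * v1 + g02) / g22).
have -> : c = B v v by rewrite [RHS]inner_product_LDL !mxE /= /v1; ring.
by apply: posB; rewrite col3_eq0 oner_eq0.
Qed.

Lemma isom_up_to_scaling_act_Umat :
  exists2 l : R, 0 < l & isom_up_to_scaling B (act (Umat l) (@ip0 R)).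
Proof.
have g22_gt0 := gram22_gt0; have s_gt0 := schur1_gt0; have c_gt0 := schur0_gt0.
pose a := Num.sqrt (s / c); pose l := Num.sqrt (g22 / s).
have a_gt0 : 0 < a by rewrite sqrtr_gt0 divr_gt0.
have l_gt0 : 0 < l by rewrite sqrtr_gt0 divr_gt0.
have c_aa : c * (a * a) = s.
  by rewrite -expr2 sqr_sqrtr ?ltW ?divr_gt0 // mulrC divfK ?gt_eqF.
have ll : l * l = g22 / s by rewrite -expr2 sqr_sqrtr ?ltW ?divr_gt0.
exists l => //; exists c, (r3_aut (a * t / s) (a * g02 / g22) a (a * g12 / g22)).
split=> //; split=> [|x y]; first by apply: is_lie_aut_r3_aut; rewrite gt_eqF.
rewrite inner_product_LDL act_Umat_ip0E ?gt_eqF // !r3_autE !col3E.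
transitivity (c * (x i0 0 * y i0 0) + c * (a * a) * (u1 x * u1 y)
              + c * (a * a) * (l * l) * (u2 x * u2 y)); last by ring.
by rewrite c_aa ll (mulrC s (g22 / s)) divfK ?gt_eqF.
Qed.

End NormalForm.

Theorem proposition3p8 (R : realType) :
  (forall l : R, 0 < l ->
     Umat l \in unitmx /\ is_inner_product (act (Umat l) (@ip0 R))) /\
  (forall B : bform R, is_inner_product B ->
     exists l : R, 0 < l /\ pclass B = pclass (act (Umat l) (@ip0 R))).
Proof.
split=> [l l_gt0 | B B_ip].
  have U_unit : Umat l \in unitmx by rewrite Umat_unit ?gt_eqF.
  by split=> //; apply: act_inner_product U_unit (ip0_inner_product R).
have [l l_gt0 B_isom] := isom_up_to_scaling_act_Umat B_ip.
by exists l; split; last exact: pclass_eq.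
Qed.
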